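(* Let $\lambda>0$, $\Sigma\in\mathbb{R}^{d\times d}$ symmetric positive definite, and $\mathcal{R}_{\mathrm{soft},\infty}(\mu)=\operatorname{tr}(\Sigma)-2\lambda\mu^\top\Sigma^2\mu+\lambda^2(\mu^\top\Sigma\mu)(\mu^\top\Sigma^2\mu)$. The function $\mathcal{R}_{\mathrm{soft},\infty}$ is coercive, and for any $\mu_0\in\mathbb{R}^d$ the solution $\mu_\infty$ of $\dot\mu_\infty=-\nabla\mathcal{R}_{\mathrm{soft},\infty}(\mu_\infty)$, $\mu_\infty(0)=\mu_0$, is bounded: there exists $\rho\ge\|\mu_0\|$ such that \[ \{\mu_\infty(t):t\ge0\}\subset\{\mu\in\mathbb{R}^d:\mathcal{R}_{\mathrm{soft},\infty}(\mu)\le\mathcal{R}_{\mathrm{soft},\infty}(\mu_0)\}\subset B(0,\rho). \]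
   Context: $B(0,\rho)$ is the closed ball of radius $\rho$ centered at $0$. *)

From HB Require Import structures.
From mathcomp Require Import all_boot all_order all_algebra.
From mathcomp Require Import all_classical all_reals all_analysis.
Set Implicit Arguments. Unset Strict Implicit. Unset Printing Implicit Defensive.
Import Order.TTheory GRing.Theory Num.Theory.
Import numFieldNormedType.Exports.
Local Open Scope ring_scope.

Definition dotv {R : realType} {d : nat} (u v : 'rV[R]_d) : R :=
  \sum_(i < d) u 0 i * v 0 i.
Definition enorm {R : realType} {d : nat} (u : 'rV[R]_d) : R :=
  Num.sqrt (dotv u u).

Definition qform {R : realType} {d : nat} (A : 'M[R]_d) (mu : 'rV[R]_d) : R :=
  (mu *m A *m mu^T) 0 0.

Definition symmetric_pd {R : realType} {d : nat} (S : 'M[R]_d) : Prop :=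
  S^T = S /\ forall v : 'rV[R]_d, v != 0 -> 0 < qform S v.

Definition Rsoft {R : realType} {d : nat} (lam : R) (S : 'M[R]_d)
  (mu : 'rV[R]_d) : R :=
  \tr S - 2 * lam * qform (S *m S) mu
  + lam ^+ 2 * (qform S mu * qform (S *m S) mu).

Definition is_gradient {R : realType} {d : nat} (f : 'rV[R]_d -> R)
  (x g : 'rV[R]_d) : Prop :=
  differentiable f x /\ ('d f x : 'rV[R]_d -> R) = (fun h => dotv g h).

Definition coercive {R : realType} {d : nat} (f : 'rV[R]_d -> R) : Prop :=
  forall M : R, exists r : R, forall mu, r <= enorm mu -> M <= f mu.

Definition grad_flow_sol {R : realType} {d : nat} (f : 'rV[R]_d -> R)
  (mu0 : 'rV[R]_d) (mu : R -> 'rV[R]_d) : Prop :=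
  mu 0 = mu0 /\
  {within `[0, +oo[, continuous mu}%classic /\
  forall t : R, 0 < t ->
    exists g, is_gradient f (mu t) g /\ is_derive t 1 mu (- g).

From HB Require Import structures.
From mathcomp Require Import all_boot all_order all_algebra.
From mathcomp Require Import all_classical all_reals all_analysis.
From mathcomp Require Import ring lra.
Import Order.TTheory GRing.Theory Num.Theory.
Import numFieldNormedType.Exports.
Local Open Scope ring_scope.

(* With a := mu^T S mu and b := mu^T S^2 mu, R_soft = tr S + b + (lam^2 a - 2 lam - 1) b.
   Both forms are positive definite, so a, b >= c |mu|^2 (by compactness of the
   unit sphere); hence R_soft >= tr S + c |mu|^2 once |mu| is large, which gives
   coercivity and bounded sublevel sets.  Along the flow, (R_soft o mu)' =
   -|grad R_soft|^2 <= 0, so the trajectory stays in the initial sublevel set. *)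

Section Euclidean.
Context {R : realType} {d : nat}.
Implicit Types (u v w : 'rV[R]_d) (A : 'M[R]_d).
Local Open Scope classical_set_scope.

Lemma dotv_mulmx_tr u w : (u *m w^T) 0 0 = dotv u w.
Proof. by rewrite mxE; apply: eq_bigr => i _; rewrite mxE. Qed.

Lemma qformE A v : qform A v = dotv (v *m A) v.
Proof. exact: dotv_mulmx_tr. Qed.

Lemma dotvN u w : dotv u (- w) = - dotv u w.
Proof. by rewrite /dotv -sumrN; apply: eq_bigr => i _; rewrite mxE mulrN. Qed.

Lemma dotvZ k u w : dotv (k *: u) (k *: w) = k ^+ 2 * dotv u w.
Proof. by rewrite /dotv mulr_sumr; apply: eq_bigr => i _; rewrite !mxE; ring. Qed.

Lemma qformZ A k v : qform A (k *: v) = k ^+ 2 * qform A v.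
Proof. by rewrite !qformE -scalemxAl dotvZ. Qed.

Lemma qform0 A : qform A 0 = 0.
Proof. by rewrite /qform !mul0mx mxE. Qed.

Lemma qform1 v : qform 1%:M v = dotv v v.
Proof. by rewrite qformE mulmx1. Qed.

Lemma qform_sqr A v : A^T = A -> qform (A *m A) v = dotv (v *m A) (v *m A).
Proof. by move=> sA; rewrite /qform -dotv_mulmx_tr trmx_mul sA !mulmxA. Qed.

Lemma dotv_ge0 u : 0 <= dotv u u.
Proof. by apply: sumr_ge0 => i _; rewrite -expr2 sqr_ge0. Qed.

Lemma dotv_eq0 u : (dotv u u == 0) = (u == 0).
Proof.
apply/eqP/eqP => [u0|->]; last by rewrite -qform1 qform0.
apply/matrixP => i j; rewrite (ord1 i) mxE; apply/eqP; rewrite -sqrf_eq0 expr2.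
apply/eqP; apply: (psumr_eq0P _ u0) => // k _; by rewrite -expr2 sqr_ge0.
Qed.

Lemma dotv_gt0 u : u != 0 -> 0 < dotv u u.
Proof. by rewrite lt_def dotv_ge0 dotv_eq0 andbT. Qed.

Lemma enorm_sqr u : enorm u ^+ 2 = dotv u u.
Proof. exact/sqr_sqrtr/dotv_ge0. Qed.

Lemma dotv_normalize u : u != 0 -> dotv ((enorm u)^-1 *: u) ((enorm u)^-1 *: u) = 1.
Proof. by move=> u0; rewrite dotvZ exprVn enorm_sqr mulVf // gt_eqF ?dotv_gt0. Qed.

Lemma continuous_sumr (T : topologicalType) n (F : 'I_n -> T -> R) :
  (forall i, continuous (F i)) -> continuous (fun x => \sum_(i < n) F i x).
Proof. by move=> F_cont; apply: continuous_big => //; exact: add_continuous. Qed.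

Lemma qform_continuous A : continuous (qform A).
Proof.
have -> : qform A = fun v => \sum_(j < d) (\sum_(k < d) v 0 k * A k j) * v 0 j.
  by apply: funext => v; rewrite qformE; apply: eq_bigr => j _; rewrite mxE.
apply: continuous_sumr => j v; apply: continuousM; last exact: coord_continuous.
apply: continuous_sumr => k w; apply: continuousM; first exact: coord_continuous.
exact: cst_continuous.
Qed.

Lemma unit_sphere_compact : compact [set v : 'rV[R]_d | dotv v v = 1].
Proof.
have cube_compact : compact [set v : 'rV[R]_d | forall i, `[-1, 1] (v ord0 i)].
  exact: rV_compact (fun=> @segment_compact R (-1) 1).
apply: subclosed_compact cube_compact _.
  rewrite (_ : mkset _ = qform 1%:M @^-1` [set 1]).
    by apply: preimage_closed => [v _|]; [exact: qform_continuous | exact: closed_eq].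
  by apply: funext => v /=; rewrite qform1.
move=> v v1 i /=; rewrite in_itv /= -ler_norml -(expr_le1 (n := 2)) //.
rewrite real_normK ?num_real // -v1 /dotv (bigD1 i) //= -expr2 lerDl.
by apply: sumr_ge0 => k _; rewrite -expr2 sqr_ge0.
Qed.

Lemma qform_ge_dotv A : (forall v, v != 0 -> 0 < qform A v) ->
  exists2 c, 0 < c & forall v, c * dotv v v <= qform A v.
Proof.
move=> A_pd.
suff [c c_gt0 sphere_ge] : exists2 c, 0 < c & forall v, dotv v v = 1 -> c <= qform A v.
  exists c => // v; have [->|v0] := eqVneq v 0; first by rewrite -qform1 !qform0 mulr0.
  have := sphere_ge _ (dotv_normalize v v0).
  by rewrite qformZ exprVn enorm_sqr ler_pdivlMl ?dotv_gt0 // mulrC.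
pose K := [set v : 'rV[R]_d | dotv v v = 1].
have [[w Kw]|K0] := pselect (K !=set0); last first.
  by exists 1 => // v v1; exfalso; apply: K0; exists v.
have qK : {within K, continuous (qform A)}.
  by apply: continuous_subspaceT => v; exact: qform_continuous.
have [m Km m_min] := compact_EVT_min (ex_intro _ w Kw) unit_sphere_compact qK.
exists (qform A m) => [|v v1]; last by apply: m_min; rewrite inE.
by apply: A_pd; rewrite -dotv_eq0 (set_mem Km) oner_neq0.
Qed.

Lemma qform_sqr_pd A : A^T = A -> (forall v, v != 0 -> 0 < qform A v) ->
  forall v, v != 0 -> 0 < qform (A *m A) v.
Proof.
move=> A_sym A_pd v v0; rewrite qform_sqr // dotv_gt0 //.
by apply: contraTneq (A_pd v v0) => vA0; rewrite /qform vA0 mul0mx mxE ltxx.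
Qed.

End Euclidean.

Section Coercive_gradient_flow.
Context {R : realType} {d : nat}.
Local Open Scope classical_set_scope.

Lemma coercive_sublevel_bounded {f : 'rV[R]_d -> R} : coercive f ->
  forall M, exists rho, forall v, f v <= M -> enorm v <= rho.
Proof.
move=> f_coer M; have [r r_large] := f_coer (M + 1).
exists r => v fv.
by rewrite leNgt; apply/negP => /ltW /r_large; lra.
Qed.

Lemma coercive_dotv {f : 'rV[R]_d -> R} :
  (forall M, exists e, forall mu, e <= dotv mu mu -> M <= f mu) -> coercive f.
Proof.
move=> large M; have [e fe] := large M.
exists (1 + `|e|) => mu r_le; apply: fe; rewrite -enorm_sqr.
have := ler_norm e; have := normr_ge0 e; nra.
Qed.

Lemma grad_flow_nonincreasing {f : 'rV[R]_d -> R} {mu0 mu} :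
  continuous f -> grad_flow_sol f mu0 mu -> forall t, 0 <= t -> f (mu t) <= f mu0.
Proof.
move=> f_cont [<- [mu_cont mu_flow]] t; rewrite le_eqVlt => /predU1P[<- //|t_gt0].
have dF x : x \in `]0, t[%R -> derivable (f \o mu) x 1 /\ (f \o mu)^`() x <= 0.
  rewrite in_itv /= => /andP[x_gt0 _].
  have [g [[df_mu df_muE] [dmu dmuE]]] := mu_flow x x_gt0.
  have mu_diff : differentiable mu x by apply/derivable1_diffP.
  have F_diff := differentiable_comp mu_diff df_mu.
  split; first exact: diff_derivable.
  rewrite derive1E deriveE // diff_comp // /= df_muE -deriveE // dmuE dotvN.
  by rewrite oppr_le0 dotv_ge0.
have F_cont : {within `[0, t], continuous (f \o mu)}.
  have mu_cont' : {within `[0, t], continuous mu}.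
    by apply: continuous_subspaceW mu_cont => x /=; rewrite !in_itv /= => /andP[->].
  by move=> x; apply: (continuous_comp (mu_cont' x)); exact: f_cont.
apply: (ler0_derive1_le_cc (fun x hx => (dF x hx).1) (fun x hx => (dF x hx).2) F_cont).
all: by rewrite ?in_itv /= ?lexx ltW.
Qed.

End Coercive_gradient_flow.

Section Rsoft.
Context {R : realType} {d : nat} (lam : R) (S : 'M[R]_d).
Hypotheses (lam_gt0 : 0 < lam) (S_sym : S^T = S).
Hypothesis S_pd : forall v, v != 0 -> 0 < qform S v.

Lemma Rsoft_continuous : continuous (Rsoft lam S).
Proof.
have -> : Rsoft lam S = cst (\tr S) + cst (- (2 * lam)) \* qform (S *m S)
                        + cst (lam ^+ 2) \* (qform S \* qform (S *m S)).
  by apply: funext => mu; rewrite /Rsoft !fctE /=; ring.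
move=> mu; apply: continuousD; first apply: continuousD.
- exact: cst_continuous.
- by apply: continuousM; [exact: cst_continuous | exact: qform_continuous].
- apply: continuousM; first exact: cst_continuous.
  by apply: continuousM; exact: qform_continuous.
Qed.

Lemma Rsoft_ge_trace mu : 2 * lam + 1 <= lam ^+ 2 * qform S mu ->
  \tr S + qform (S *m S) mu <= Rsoft lam S mu.
Proof.
have b_ge0 : 0 <= qform (S *m S) mu by rewrite qform_sqr // dotv_ge0.
rewrite /Rsoft; nra.
Qed.

Lemma Rsoft_coercive : coercive (Rsoft lam S).
Proof.
have [c1 c1_gt0 a_ge] := qform_ge_dotv S S_pd.
have [c2 c2_gt0 b_ge] := qform_ge_dotv (S *m S) (qform_sqr_pd S S_sym S_pd).
have lc1_gt0 : 0 < lam ^+ 2 * c1 by rewrite mulr_gt0 ?exprn_gt0.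
apply: coercive_dotv => M.
exists (Num.max ((2 * lam + 1) / (lam ^+ 2 * c1)) ((M - \tr S) / c2)) => mu.
rewrite ge_max !ler_pdivrMr // => /andP[e_ge1 e_ge2].
apply: le_trans (Rsoft_ge_trace mu _); first by have := b_ge mu; lra.
apply: le_trans e_ge1 _; rewrite mulrCA ler_wpM2l ?exprn_ge0 ?(ltW lam_gt0) // mulrC.
exact: a_ge.
Qed.

End Rsoft.

Theorem lemma1 (R : realType) (d : nat) (lam : R) (S : 'M[R]_d) :
  0 < lam -> symmetric_pd S ->
  coercive (Rsoft lam S) /\
  forall (mu0 : 'rV[R]_d) (mu : R -> 'rV[R]_d),
    grad_flow_sol (Rsoft lam S) mu0 mu ->
    exists rho : R, enorm mu0 <= rho /\
      (forall t : R, 0 <= t -> Rsoft lam S (mu t) <= Rsoft lam S mu0) /\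
      (forall v : 'rV[R]_d, Rsoft lam S v <= Rsoft lam S mu0 -> enorm v <= rho).
Proof.
move=> lam_gt0 [S_sym S_pd].
have coer : coercive (Rsoft lam S) by exact: Rsoft_coercive.
split=> // mu0 mu mu_sol.
have [rho sublevel_le] := coercive_sublevel_bounded coer (Rsoft lam S mu0).
exists (Num.max rho (enorm mu0)); split; first by rewrite le_max lexx orbT.
split; first exact: grad_flow_nonincreasing (Rsoft_continuous lam S) mu_sol.
by move=> v /sublevel_le v_le; rewrite le_max v_le.
Qed.
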